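(* Let $n<0<m$ be integers. There is no family $(\Phi_j)_{n\leq j\leq m}$ of orientation preserving homeomorphisms of the circle $S^1$ such that: each $\Phi_j$ with $j<0$ commutes with each $\Phi_{j'}$ with $j'>0$; $\Phi_j$ has a fixed point if and only if $j\neq 0$; and $\Phi_1\circ\cdots\circ\Phi_m=\Phi_0=\Phi_{-1}\circ\Phi_{-2}\circ\cdots\circ\Phi_{n}$. *)

From Stdlib Require Import Reals Lra ZArith.
Open Scope R_scope.

Definition S1 : Type := {p : R * R | fst p * fst p + snd p * snd p = 1}.

(* Euclidean distance between points of S^1 (topology of S^1 = induced topology). *)
Definition S1dist (p q : S1) : R :=
  sqrt (Rsqr (fst (proj1_sig p) - fst (proj1_sig q))
      + Rsqr (snd (proj1_sig p) - snd (proj1_sig q))).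

Definition S1_continuous (f : S1 -> S1) : Prop :=
  forall p eps, 0 < eps ->
    exists delta, 0 < delta /\
      forall q, S1dist p q < delta -> S1dist (f p) (f q) < eps.

Definition S1_homeomorphism (f : S1 -> S1) : Prop :=
  exists g : S1 -> S1,
    (forall p, g (f p) = p) /\ (forall p, f (g p) = p) /\
    S1_continuous f /\ S1_continuous g.

Lemma expS1_proof (x : R) :
  cos (2 * PI * x) * cos (2 * PI * x) + sin (2 * PI * x) * sin (2 * PI * x) = 1.
Proof.
  pose proof (sin2_cos2 (2 * PI * x)) as H. unfold Rsqr in H. lra.
Qed.

Definition expS1 (x : R) : S1 :=
  exist _ (cos (2 * PI * x), sin (2 * PI * x)) (expS1_proof x).

(* Orientation preserving: f admits an increasing (degree-one) lift to R. *)
Definition S1_orientation_preserving (f : S1 -> S1) : Prop :=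
  exists F : R -> R,
    continuity F /\
    (forall x y, x < y -> F x < F y) /\
    (forall x, F (x + 1) = F x + 1) /\
    (forall x, f (expS1 x) = expS1 (F x)).

Definition has_fixed_point (f : S1 -> S1) : Prop := exists p, f p = p.

(* comp_up Phi k = Phi 1 o Phi 2 o ... o Phi k  (identity for k = 0). *)
Fixpoint comp_up (Phi : Z -> S1 -> S1) (k : nat) : S1 -> S1 :=
  match k with
  | O => fun p => p
  | S k' => fun p => comp_up Phi k' (Phi (Z.of_nat (S k')) p)
  end.

(* comp_down Phi k = Phi (-1) o Phi (-2) o ... o Phi (-k)  (identity for k = 0). *)
Fixpoint comp_down (Phi : Z -> S1 -> S1) (k : nat) : S1 -> S1 :=
  match k with
  | O => fun p => p
  | S k' => fun p => comp_down Phi k' (Phi (- Z.of_nat (S k'))%Z p)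
  end.

(* Work with fixed-point sets lifted to R: for a circle map f let
   fixed_lifts f = { x | f (expS1 x) = expS1 x }, a closed 1-periodic set.
   Choose lifts f_i of Phi_i (i > 0) having fixed points.  Since Phi_j (j < 0)
   commutes with Phi_i, each fixed_lifts (Phi_j) is invariant under every f_i.
   The core lemma (common_fixed_point) says: if two disjoint nonempty closed
   periodic sets S, T are invariant under a family of lifts with fixed points,
   the family has a common fixed point.  (Left endpoints of the gaps of S that
   contain points of T form an invariant set; if it is uniformly discrete, a
   lift with a fixed point cannot move any of its points; otherwise S and T come
   arbitrarily close, and by compactness they meet.)  A common fixed point of
   the f_i would be fixed by Phi_0 = Phi_1 o ... o Phi_m, so by induction on k
   the sets fixed_lifts (Phi_(-1)), ..., fixed_lifts (Phi_(-k)) always share a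
   point; for k = -n this point is fixed by Phi_0 = Phi_(-1) o ... o Phi_n,
   contradicting the absence of fixed points of Phi_0. *)

From Stdlib Require Import Reals Lra Lia ZArith Rtopology Classical ClassicalEpsilon.
Open Scope R_scope.

Lemma integer_translation (P : R -> Prop) :
  (forall x, P x <-> P (x + 1)) -> forall x (z : Z), P x <-> P (x + IZR z).
Proof.
  intros HP.
  assert (Hnat : forall x (k : nat), P x <-> P (x + INR k)).
  { intros x k; induction k as [|k IH].
    - simpl; rewrite Rplus_0_r; tauto.
    - rewrite S_INR, IH, HP, Rplus_assoc; tauto. }
  intros x [|p|p].
  - simpl; rewrite Rplus_0_r; tauto.
  - change (IZR (Zpos p)) with (IPR p); rewrite <- INR_IPR; apply Hnat.
  - change (IZR (Zneg p)) with (- IPR p); rewrite <- INR_IPR.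
    rewrite (Hnat (x + - INR (Pos.to_nat p)) (Pos.to_nat p)).
    replace (x + - INR (Pos.to_nat p) + INR (Pos.to_nat p)) with x by ring; tauto.
Qed.

Lemma S1_eq (p q : S1) : proj1_sig p = proj1_sig q -> p = q.
Proof.
  destruct p as [p Hp], q as [q Hq]; simpl; intros ->.
  f_equal; apply proof_irrelevance.
Qed.

Lemma expS1_add1 x : expS1 (x + 1) = expS1 x.
Proof.
  apply S1_eq; simpl.
  replace (2 * PI * (x + 1)) with (2 * PI * x + 2 * INR 1 * PI) by (simpl; ring).
  now rewrite cos_period, sin_period.
Qed.

Lemma expS1_shift x (z : Z) : expS1 (x + IZR z) = expS1 x.
Proof.
  symmetry; apply (integer_translation (fun y => expS1 x = expS1 y)); [|reflexivity].
  intros y; now rewrite expS1_add1.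
Qed.

Lemma expS1_inj a b : expS1 a = expS1 b -> exists z : Z, a = b + IZR z.
Proof.
  intros H; pose proof PI_RGT_0 as HPI.
  assert (Hsin : sin (2 * PI * a - 2 * PI * b) = 0).
  { apply (f_equal (@proj1_sig _ _)) in H; simpl in H; injection H as Hc Hs.
    rewrite sin_minus, Hc, Hs; ring. }
  destruct (sin_eq_0_0 _ Hsin) as [k Hk].
  destruct (Zeven_odd_dec k) as [Hev|Hodd].
  - destruct (Zeven_ex k Hev) as [q ->]; exists q; rewrite mult_IZR in Hk.
    apply (Rmult_eq_reg_l (2 * PI)); lra.
  - exfalso; destruct (Zodd_ex k Hodd) as [q ->]; rewrite plus_IZR, mult_IZR in Hk.
    assert (Ha : a = b + / 2 + IZR q) by (apply (Rmult_eq_reg_l (2 * PI)); lra).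
    rewrite Ha, expS1_shift in H.
    apply (f_equal (@proj1_sig _ _)) in H; simpl in H; injection H as Hc Hs.
    replace (2 * PI * (b + / 2)) with (2 * PI * b + PI) in Hc, Hs by field.
    rewrite neg_cos in Hc; rewrite neg_sin in Hs.
    apply (cos_sin_0 (2 * PI * b)); lra.
Qed.

Lemma expS1_surj (p : S1) : exists x, expS1 x = p.
Proof.
  destruct p as [[a b] Hab]; simpl in Hab.
  assert (Ha : -1 <= a <= 1) by (split; nra).
  assert (Hs : sqrt (1 - a²) = Rabs b).
  { rewrite <- sqrt_Rsqr_abs; f_equal; unfold Rsqr; lra. }
  pose proof PI_RGT_0.
  destruct (Rle_dec 0 b) as [Hb|Hb].
  - exists (acos a / (2 * PI)); apply S1_eq; simpl.
    replace (2 * PI * (acos a / (2 * PI))) with (acos a) by (field; lra).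
    rewrite cos_acos, sin_acos, Hs, Rabs_pos_eq; auto.
  - exists (- acos a / (2 * PI)); apply S1_eq; simpl.
    replace (2 * PI * (- acos a / (2 * PI))) with (- acos a) by (field; lra).
    rewrite cos_neg, sin_neg, cos_acos, sin_acos, Hs, Rabs_left by lra; auto.
    f_equal; f_equal; lra.
Qed.

Definition is_lift (F : R -> R) : Prop :=
  continuity F /\ (forall x y, x < y -> F x < F y) /\ (forall x, F (x + 1) = F x + 1).

Definition lifts (f : S1 -> S1) (F : R -> R) : Prop := forall x, f (expS1 x) = expS1 (F x).

Lemma orientation_preserving_lift f :
  S1_orientation_preserving f -> exists F, is_lift F /\ lifts f F.
Proof. intros [F [Hc [Hm [H1 Hf]]]]; exists F; repeat split; auto. Qed.

Lemma continuity_eps_delta (F : R -> R) : continuity F ->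
  forall x eps, 0 < eps ->
    exists d, 0 < d /\ forall y, Rabs (y - x) < d -> Rabs (F y - F x) < eps.
Proof.
  intros Hc x eps He; destruct (Hc x eps He) as [d [Hd H]].
  exists d; split; [lra|]; intros y Hy.
  destruct (Req_dec y x) as [->|Hne].
  - rewrite Rminus_diag, Rabs_R0; lra.
  - apply (H y); repeat split; auto.
Qed.

Lemma lift_shift F : is_lift F -> forall x (z : Z), F (x + IZR z) = F x + IZR z.
Proof.
  intros [_ [_ H1]] x z.
  assert (Hstep : forall y, F y = F x + (y - x) <-> F (y + 1) = F x + (y + 1 - x)).
  { intros y; rewrite H1; split; intros; lra. }
  pose proof (proj1 (integer_translation (fun y => F y = F x + (y - x)) Hstep x z)) as Hz.
  simpl in Hz; lra.
Qed.

Lemma lift_le F : is_lift F -> forall x y, x <= y -> F x <= F y.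
Proof. intros [_ [Hm _]] x y [Hlt| ->]; [left; auto | right; auto]. Qed.

Lemma lift_lt_iff F : is_lift F -> forall x y, x < y <-> F x < F y.
Proof.
  intros HF x y; split; [apply HF|].
  intros H; destruct (Rlt_le_dec x y) as [|Hle]; auto.
  apply (lift_le F HF) in Hle; lra.
Qed.

(* Lifts are onto (intermediate value theorem on a unit interval). *)
Lemma lift_surj F : is_lift F -> forall c, exists x, F x = c.
Proof.
  intros HF c; pose proof HF as [Hc [_ H1]].
  set (k := Int_part (c - F 0)).
  destruct (base_Int_part (c - F 0)) as [B1 B2]; fold k in B1, B2.
  pose proof (lift_shift F HF 0 k) as Ek; rewrite Rplus_0_l in Ek.
  destruct (IVT_cor (fun x => F x - c) (IZR k) (IZR k + 1)) as [z [_ Hz]].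
  - apply continuity_minus; auto; apply continuity_const; intros ? ?; auto.
  - lra.
  - rewrite H1, Ek; nra.
  - exists z; lra.
Qed.

(* Fixed points of a lift recur with period 1, so there is one above any point. *)
Lemma lift_fixed_point_above F : is_lift F -> forall y, F y = y ->
  forall o, exists y', o <= y' /\ F y' = y'.
Proof.
  intros HF y Hy o; destruct (archimed (o - y)) as [A _].
  exists (y + IZR (up (o - y))); split; [lra|].
  rewrite (lift_shift F HF), Hy; reflexivity.
Qed.

(* A circle map with a fixed point has a lift with a fixed point: correct the
   given lift by the integer by which it moves a lifted fixed point. *)
Lemma fixed_point_lift f F : is_lift F -> lifts f F -> has_fixed_point f ->
  exists G, is_lift G /\ lifts f G /\ exists y, G y = y.
Proof.
  intros HF Hf [p Hp]; destruct (expS1_surj p) as [y <-].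
  rewrite Hf in Hp; destruct (expS1_inj _ _ Hp) as [z Hz].
  destruct HF as [Hc [Hm H1]].
  exists (fun x => F x - IZR z); repeat split.
  - apply continuity_minus; auto; apply continuity_const; intros ? ?; auto.
  - intros a b Hab; specialize (Hm a b Hab); lra.
  - intros a; rewrite H1; ring.
  - intros x; rewrite Hf, <- (expS1_shift (F x - IZR z) z); f_equal; ring.
  - exists y; lra.
Qed.

Definition closedR (S : R -> Prop) : Prop :=
  forall x, ~ S x -> exists d, 0 < d /\ forall y, Rabs (y - x) < d -> ~ S y.

(* Subsets of R invariant under x |-> x + 1 (preimages of subsets of S1). *)
Definition periodic (S : R -> Prop) : Prop := forall x, S x <-> S (x + 1).

Lemma closedR_adherent S l : closedR S ->
  (forall d, 0 < d -> exists s, S s /\ Rabs (s - l) < d) -> S l.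
Proof.
  intros HS Hl; apply NNPP; intros Hnot.
  destruct (HS l Hnot) as [d [Hd Hfar]]; destruct (Hl d Hd) as [s [Hs Hsl]].
  exact (Hfar s Hsl Hs).
Qed.

Lemma closedR_forall {J : Type} (P : J -> Prop) (S : J -> R -> Prop) :
  (forall j, P j -> closedR (S j)) -> closedR (fun x => forall j, P j -> S j x).
Proof.
  intros HS x Hx; apply not_all_ex_not in Hx; destruct Hx as [j Hj].
  apply imply_to_and in Hj; destruct Hj as [Hj Hxj].
  destruct (HS j Hj x Hxj) as [d [Hd Hfar]].
  exists d; split; auto; intros y Hy Hall; exact (Hfar y Hy (Hall j Hj)).
Qed.

Lemma periodic_forall {J : Type} (P : J -> Prop) (S : J -> R -> Prop) :
  (forall j, P j -> periodic (S j)) -> periodic (fun x => forall j, P j -> S j x).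
Proof.
  intros HS x; split; intros Hall j Hj; apply (HS j Hj x); auto.
Qed.

Definition mirror (S : R -> Prop) : R -> Prop := fun x => S (- x).

Lemma mirror_closed S : closedR S -> closedR (mirror S).
Proof.
  intros HS x Hx; destruct (HS (- x) Hx) as [d [Hd Hfar]].
  exists d; split; auto; intros y Hy; apply Hfar.
  rewrite <- Rabs_Ropp; replace (- (- y - - x)) with (y - x) by ring; exact Hy.
Qed.

Lemma mirror_periodic S : periodic S -> periodic (mirror S).
Proof.
  intros HS x; unfold mirror; rewrite (HS (- (x + 1))).
  replace (- (x + 1) + 1) with (- x) by ring; tauto.
Qed.

Lemma greatest_below S : closedR S -> periodic S -> (exists s, S s) -> forall t,
  exists a, S a /\ a <= t /\ forall s, S s -> s <= t -> s <= a.
Proof.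
  intros Hc Hp [s0 Hs0] t.
  set (E := fun s => S s /\ s <= t).
  assert (HE : exists s, E s).
  { destruct (base_Int_part (t - s0)) as [B1 B2].
    exists (s0 + IZR (Int_part (t - s0))); split; [now apply integer_translation | lra]. }
  destruct (completeness E ltac:(exists t; intros s [_ H]; auto) HE) as [a [Hub Hlub]].
  assert (Hat : a <= t) by (apply Hlub; intros s [_ H]; auto).
  exists a; split; [|split; auto; intros s Hs Hst; apply Hub; split; auto].
  apply (closedR_adherent S a Hc); intros d Hd.
  apply NNPP; intros Hnone.
  assert (a <= a - d / 2); [|lra].
  apply Hlub; intros s [Hs Hst]; apply Rnot_lt_le; intros Hlt; apply Hnone.
  exists s; split; auto; pose proof (Hub s (conj Hs Hst)); apply Rabs_def1; lra.
Qed.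

Lemma least_above S : closedR S -> periodic S -> (exists s, S s) -> forall t,
  exists b, S b /\ t <= b /\ forall s, S s -> t <= s -> b <= s.
Proof.
  intros Hc Hp [s0 Hs0] t.
  destruct (greatest_below (mirror S) (mirror_closed S Hc) (mirror_periodic S Hp)
              ltac:(exists (- s0); unfold mirror; now rewrite Ropp_involutive) (- t))
    as [a [Ha [Hat Hmax]]].
  exists (- a); split; [exact Ha | split; [lra|]].
  intros s Hs Hts; assert (- s <= a); [|lra].
  apply Hmax; [unfold mirror; now rewrite Ropp_involutive | lra].
Qed.

(* Translate nearby pairs into [0, 1], extract a cluster point by
   Bolzano-Weierstrass, and observe that it adheres to both sets. *)
Lemma closed_periodic_meet S T : closedR S -> closedR T -> periodic S -> periodic T ->
  (forall eps, 0 < eps -> exists s t, S s /\ T t /\ Rabs (s - t) < eps) ->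
  exists x, S x /\ T x.
Proof.
  intros HSc HTc HSp HTp Hclose.
  assert (Hpair : forall k : nat, exists st : R * R, S (fst st) /\ T (snd st) /\
            Rabs (fst st - snd st) < / (INR k + 1) /\ 0 <= fst st <= 1).
  { intros k; destruct (Hclose (/ (INR k + 1))) as [s [t [Hs [Ht Hst]]]].
    { apply Rinv_0_lt_compat; pose proof (pos_INR k); lra. }
    destruct (base_Int_part s) as [B1 B2].
    exists (s + IZR (- Int_part s), t + IZR (- Int_part s)); simpl.
    split; [now apply integer_translation|].
    split; [now apply integer_translation|].
    replace (s + IZR (- Int_part s) - (t + IZR (- Int_part s))) with (s - t) by ring.
    rewrite opp_IZR; split; [auto | lra]. }
  destruct (choice _ Hpair) as [st Hst].
  destruct (Bolzano_Weierstrass (fun k => fst (st k)) (fun c => 0 <= c <= 1)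
              (compact_P3 0 1) ltac:(intros k; apply Hst)) as [l Hl].
  assert (Hnear : forall d, 0 < d -> forall N, exists k,
             (N <= k)%nat /\ Rabs (fst (st k) - l) < d).
  { intros d Hd N; destruct (Hl (disc l (mkposreal d Hd)) N) as [k [Hk Hkl]].
    - exists (mkposreal d Hd); intros y Hy; exact Hy.
    - exists k; split; auto. }
  exists l; split; apply closedR_adherent; auto; intros d Hd.
  - destruct (Hnear d Hd 0%nat) as [k [_ Hk]].
    exists (fst (st k)); split; [apply Hst | exact Hk].
  - destruct (archimed_cor1 (d / 2)) as [N [HN HN0]]; [lra|].
    destruct (Hnear (d / 2) ltac:(lra) N) as [k [HkN Hk]].
    destruct (Hst k) as [_ [HT [Hdist _]]].
    exists (snd (st k)); split; auto.
    assert (Hsmall : / (INR k + 1) < d / 2).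
    { apply lt_0_INR in HN0; apply le_INR in HkN.
      apply Rle_lt_trans with (/ INR N); auto.
      apply Rinv_le_contravar; lra. }
    apply Rabs_def2 in Hdist; apply Rabs_def2 in Hk; apply Rabs_def1; lra.
Qed.

Lemma separated_sequence_unbounded (u : nat -> R) eps B : 0 < eps ->
  (forall k, u k + eps <= u (S k)) -> exists k, B < u k.
Proof.
  intros He Hu.
  assert (Hlin : forall k, u 0%nat + INR k * eps <= u k).
  { induction k as [|k IH]; [simpl; lra|]; rewrite S_INR; specialize (Hu k); lra. }
  destruct (INR_unbounded ((B - u 0%nat) / eps)) as [k Hk]; exists k.
  assert (B - u 0%nat < INR k * eps); [|specialize (Hlin k); lra].
  apply (Rmult_lt_compat_r eps) in Hk; auto.
  unfold Rdiv in Hk; rewrite Rmult_assoc, Rinv_l, Rmult_1_r in Hk; lra.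
Qed.

(* In an invariant set whose points are eps-separated, no point is moved up by a
   lift with a fixed point: its orbit would increase by steps >= eps while
   staying below a fixed point. *)
Lemma lift_orbit_cannot_climb (g : R -> R) (O : R -> Prop) eps :
  is_lift g -> (exists y, g y = y) -> 0 < eps ->
  (forall x, O x -> O (g x)) -> (forall x y, O x -> O y -> x < y -> eps <= y - x) ->
  forall o, O o -> ~ o < g o.
Proof.
  intros Hg [y Hy] He HO Hsep o Ho Hclimb.
  destruct (lift_fixed_point_above g Hg y Hy o) as [y' [Hoy' Hy']].
  set (u := fun k : nat => Nat.iter k g o).
  assert (Horbit : forall k, O (u k) /\ u k < u (S k) /\ u k <= y').
  { induction k as [|k [HOk [Hlt Hle]]]; [simpl; auto|].
    change (u (S k)) with (g (u k)); change (u (S (S k))) with (g (g (u k))).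
    split; [auto|split].
    - now apply (proj1 (proj2 Hg)).
    - rewrite <- Hy'; now apply lift_le. }
  destruct (separated_sequence_unbounded u eps y' He) as [k Hk].
  - intros k; destruct (Horbit k) as [HOk [Hlt _]]; destruct (Horbit (S k)) as [HOk' _].
    specialize (Hsep _ _ HOk HOk' Hlt); lra.
  - destruct (Horbit k) as [_ [_ Hle]]; lra.
Qed.

Definition mirror_map (g : R -> R) : R -> R := fun x => - g (- x).

Lemma mirror_is_lift g : is_lift g -> is_lift (mirror_map g).
Proof.
  intros [Hc [Hm H1]]; unfold mirror_map; split; [|split].
  - exact (continuity_opp _ (continuity_comp _ g (continuity_opp _ (derivable_continuous _ derivable_id)) Hc)).
  - intros x y Hxy; specialize (Hm (- y) (- x) ltac:(lra)); lra.
  - intros x; specialize (H1 (- (x + 1))).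
    replace (- (x + 1) + 1) with (- x) in H1 by ring; lra.
Qed.

(* Hence such a lift fixes every point of a uniformly discrete invariant set
   (points moved down are handled by reflection). *)
Lemma lift_fixes_separated_invariant_set (g : R -> R) (O : R -> Prop) eps :
  is_lift g -> (exists y, g y = y) -> 0 < eps ->
  (forall x, O x -> O (g x)) -> (forall x y, O x -> O y -> x < y -> eps <= y - x) ->
  forall o, O o -> g o = o.
Proof.
  intros Hg Hfix He HO Hsep o Ho.
  destruct (Rtotal_order (g o) o) as [Hdown|[Heq|Hup]]; auto; exfalso.
  - apply (lift_orbit_cannot_climb (mirror_map g) (mirror O) eps (mirror_is_lift g Hg))
      with (o := - o); unfold mirror, mirror_map in *.
    + destruct Hfix as [y Hy]; exists (- y); rewrite Ropp_involutive, Hy; reflexivity.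
    + exact He.
    + intros x Hx; rewrite Ropp_involutive; auto.
    + intros x y Hx Hy Hxy; specialize (Hsep (- y) (- x) Hy Hx ltac:(lra)); lra.
    + now rewrite Ropp_involutive.
    + rewrite Ropp_involutive; lra.
  - exact (lift_orbit_cannot_climb g O eps Hg Hfix He HO Hsep o Ho Hup).
Qed.

Section CommonFixedPoint.

Variable I : Z -> Prop.
Variable f : Z -> R -> R.
Hypothesis Hf : forall i, I i -> is_lift (f i) /\ exists y, f i y = y.
Variables S T : R -> Prop.
Hypotheses (HSc : closedR S) (HTc : closedR T) (HSp : periodic S) (HTp : periodic T).
Hypothesis HSi : forall i, I i -> forall x, S x <-> S (f i x).
Hypothesis HTi : forall i, I i -> forall x, T x <-> T (f i x).
Hypotheses (HSn : exists s, S s) (HTn : exists t, T t).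
Hypothesis Hdisj : forall x, S x -> T x -> False.

Definition gap_start (o : R) : Prop :=
  exists o' t, o < t < o' /\ S o /\ S o' /\ T t /\ forall s, o < s < o' -> ~ S s.

(* Around a point t of T, the nearest points of S bound such a gap. *)
Lemma gap_start_exists : exists o, gap_start o.
Proof.
  destruct HTn as [t Ht].
  assert (HtS : ~ S t) by (intro; eapply Hdisj; eauto).
  destruct (greatest_below S HSc HSp HSn t) as [a [Ha [Hat Hmax]]].
  destruct (least_above S HSc HSp HSn t) as [b [Hb [Htb Hmin]]].
  exists a, b, t; split; [split|].
  - destruct Hat; auto; subst; contradiction.
  - destruct Htb; auto; subst; contradiction.
  - repeat split; auto; intros s [Has Hsb] Hs.
    destruct (Rle_dec s t); [specialize (Hmax s Hs r) | specialize (Hmin s Hs ltac:(lra))]; lra.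
Qed.

(* Lifts are increasing bijections preserving S and T, so they map gaps to gaps. *)
Lemma gap_start_invariant i : I i -> forall o, gap_start o -> gap_start (f i o).
Proof.
  intros Hi o [o' [t [[Hot Hto'] [Ho [Ho' [Ht Hgap]]]]]].
  destruct (Hf i Hi) as [Hg _].
  exists (f i o'), (f i t); split; [split; now apply Hg|].
  split; [now apply HSi|]; split; [now apply HSi|]; split; [now apply HTi|].
  intros s [Hs1 Hs2] Hs; destruct (lift_surj (f i) Hg s) as [w <-].
  apply (Hgap w); [split; now apply (lift_lt_iff (f i) Hg) | now apply (HSi i Hi)].
Qed.

(* If two gap starts x < y are close, the point of T in the gap of x is close
   to y, which lies in S beyond that gap. *)
Lemma close_gap_starts_close_sets :
  (forall eps, 0 < eps -> exists x y, gap_start x /\ gap_start y /\ x < y /\ y - x < eps) ->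
  forall eps, 0 < eps -> exists s t, S s /\ T t /\ Rabs (s - t) < eps.
Proof.
  intros Hclose eps He.
  destruct (Hclose eps He) as [x [y [[x' [t [[Hxt Htx'] [_ [_ [Ht Hgap]]]]]] [Hy [Hxy Hyx]]]]].
  destruct Hy as [_ [_ [_ [HSy _]]]].
  assert (x' <= y) by (apply Rnot_lt_le; intros Hlt; apply (Hgap y); auto).
  exists y, t; repeat split; auto; apply Rabs_def1; lra.
Qed.

(* Either gap starts are uniformly separated, and any of them is a common fixed
   point, or S and T come arbitrarily close, contradicting disjointness. *)
Lemma common_fixed_point : exists x, forall i, I i -> f i x = x.
Proof.
  destruct (classic (exists eps, 0 < eps /\
              forall x y, gap_start x -> gap_start y -> x < y -> eps <= y - x))
    as [[eps [He Hsep]]|Hnot].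
  - destruct gap_start_exists as [o Ho]; exists o; intros i Hi.
    exact (lift_fixes_separated_invariant_set (f i) gap_start eps (proj1 (Hf i Hi))
             (proj2 (Hf i Hi)) He (gap_start_invariant i Hi) Hsep o Ho).
  - exfalso; destruct (closed_periodic_meet S T HSc HTc HSp HTp) as [x [HSx HTx]].
    + apply close_gap_starts_close_sets; intros eps He; apply NNPP; intros Hfar.
      apply Hnot; exists eps; split; auto; intros x y Hx Hy Hxy.
      apply Rnot_lt_le; intros Hlt; apply Hfar; exists x, y; auto.
    + exact (Hdisj x HSx HTx).
Qed.

End CommonFixedPoint.

Lemma integer_valued_closed (h : R -> R) : continuity h ->
  closedR (fun x => exists z : Z, h x = IZR z).
Proof.
  intros Hc x Hx.
  set (k := Int_part (h x)); destruct (base_Int_part (h x)) as [B1 B2]; fold k in B1, B2.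
  assert (Hk : h x <> IZR k) by (intros E; apply Hx; exists k; exact E).
  set (e := Rmin (h x - IZR k) (IZR k + 1 - h x)).
  assert (He : 0 < e) by (apply Rmin_glb_lt; lra).
  destruct (continuity_eps_delta h Hc x e He) as [d [Hd Hnear]].
  exists d; split; auto; intros y Hy [z Hz].
  specialize (Hnear y Hy); apply Rabs_def2 in Hnear.
  assert (e <= h x - IZR k) by apply Rmin_l; assert (e <= IZR k + 1 - h x) by apply Rmin_r.
  assert (Hlow : IZR k < IZR z) by lra; assert (Hhigh : IZR z < IZR (k + 1)) by (rewrite plus_IZR; lra).
  apply lt_IZR in Hlow; apply lt_IZR in Hhigh; lia.
Qed.

Definition fixed_lifts (f : S1 -> S1) : R -> Prop := fun x => f (expS1 x) = expS1 x.

(* For an orientation preserving map with lift G it is {x | G x - x in Z}. *)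
Lemma fixed_lifts_closed f : S1_orientation_preserving f -> closedR (fixed_lifts f).
Proof.
  intros Hop; destruct (orientation_preserving_lift f Hop) as [G [[Hc _] HG]].
  assert (Hiff : forall y, fixed_lifts f y <-> exists z : Z, G y - y = IZR z).
  { intros y; unfold fixed_lifts; rewrite HG; split.
    - intros E; destruct (expS1_inj _ _ E) as [z Hz]; exists z; lra.
    - intros [z Hz]; replace (G y) with (y + IZR z) by lra; apply expS1_shift. }
  intros x Hx; rewrite Hiff in Hx.
  destruct (integer_valued_closed (fun y => G y - y)
              (continuity_minus _ _ Hc (derivable_continuous _ derivable_id)) x Hx)
    as [d [Hd Hfar]].
  exists d; split; auto; intros y Hy; rewrite Hiff; exact (Hfar y Hy).
Qed.

Lemma fixed_lifts_periodic f : periodic (fixed_lifts f).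
Proof. intros x; unfold fixed_lifts; rewrite expS1_add1; tauto. Qed.

Lemma fixed_lifts_nonempty f : has_fixed_point f -> exists x, fixed_lifts f x.
Proof. intros [p Hp]; destruct (expS1_surj p) as [x <-]; exists x; exact Hp. Qed.

(* If h is injective and commutes with f, then h permutes the fixed points of f,
   so any lift of h preserves the lifted fixed-point set of f. *)
Lemma fixed_lifts_invariant f h H :
  (forall p q, h p = h q -> p = q) -> (forall p, f (h p) = h (f p)) -> lifts h H ->
  forall x, fixed_lifts f x <-> fixed_lifts f (H x).
Proof.
  intros Hinj Hcomm HH x; unfold fixed_lifts; rewrite <- HH, Hcomm; split; intros E.
  - now rewrite E.
  - now apply Hinj.
Qed.

Lemma homeomorphism_injective f : S1_homeomorphism f -> forall p q, f p = f q -> p = q.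
Proof. intros [g [Hgf _]] p q E; rewrite <- (Hgf p), <- (Hgf q), E; reflexivity. Qed.

Lemma comp_up_fixed Phi p k : (forall i, (1 <= i <= Z.of_nat k)%Z -> Phi i p = p) ->
  comp_up Phi k p = p.
Proof.
  induction k as [|k IH]; intros H; simpl; auto.
  rewrite H by lia; apply IH; intros i Hi; apply H; lia.
Qed.

Lemma comp_down_fixed Phi p k : (forall i, (- Z.of_nat k <= i <= -1)%Z -> Phi i p = p) ->
  comp_down Phi k p = p.
Proof.
  induction k as [|k IH]; intros H; simpl; auto.
  rewrite H by lia; apply IH; intros i Hi; apply H; lia.
Qed.

Section Factorisations.

Variables (n m : Z) (Phi : Z -> S1 -> S1).
Hypotheses (hn : (n < 0)%Z) (hm : (0 < m)%Z).
Hypothesis Hop : forall j, (n <= j <= m)%Z ->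
  S1_homeomorphism (Phi j) /\ S1_orientation_preserving (Phi j).
Hypothesis Hcomm : forall j j', (n <= j < 0)%Z -> (0 < j' <= m)%Z ->
  forall p, Phi j (Phi j' p) = Phi j' (Phi j p).
Hypothesis Hfix : forall j, (n <= j <= m)%Z -> (has_fixed_point (Phi j) <-> j <> 0%Z).
Hypothesis Hup : forall p, comp_up Phi (Z.to_nat m) p = Phi 0%Z p.

Definition positive_index (i : Z) : Prop := (0 < i <= m)%Z.

Lemma Phi0_fixed_point_free : ~ has_fixed_point (Phi 0%Z).
Proof. intros H0; exact (proj1 (Hfix 0%Z ltac:(lia)) H0 eq_refl). Qed.

Lemma positive_lifts : exists f : Z -> R -> R, forall i, positive_index i ->
  is_lift (f i) /\ lifts (Phi i) (f i) /\ exists y, f i y = y.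
Proof.
  apply (choice (fun i F => positive_index i ->
                   is_lift F /\ lifts (Phi i) F /\ exists y, F y = y)).
  intros i; destruct (classic (positive_index i)) as [Hi|Hi].
  - destruct (orientation_preserving_lift _ (proj2 (Hop i ltac:(unfold positive_index in Hi; lia))))
      as [F [HF HFl]].
    destruct (fixed_point_lift _ F HF HFl) as [G HG].
    + apply Hfix; unfold positive_index in Hi; lia.
    + exists G; auto.
  - exists (fun x => x); contradiction.
Qed.

Variable f : Z -> R -> R.
Hypothesis Hf : forall i, positive_index i ->
  is_lift (f i) /\ lifts (Phi i) (f i) /\ exists y, f i y = y.

(* Such lifts have no common fixed point, as it would be fixed by Phi_0. *)
Lemma no_common_positive_fixed_point : ~ exists x, forall i, positive_index i -> f i x = x.
Proof.
  intros [x Hx]; apply Phi0_fixed_point_free; exists (expS1 x).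
  rewrite <- Hup; apply comp_up_fixed; intros i Hi.
  assert (Hi' : positive_index i) by (unfold positive_index; lia).
  destruct (Hf i Hi') as [_ [Hl _]]; rewrite Hl, Hx; auto.
Qed.

(* The lifted fixed points of Phi_j (j < 0) are preserved by the lifts f i (i > 0),
   since Phi_j commutes with the injective map Phi_i. *)
Lemma negative_fixed_lifts_invariant j : (n <= j < 0)%Z ->
  forall i, positive_index i -> forall x, fixed_lifts (Phi j) x <-> fixed_lifts (Phi j) (f i x).
Proof.
  intros Hj i Hi; unfold positive_index in Hi.
  apply (fixed_lifts_invariant _ (Phi i)).
  - apply homeomorphism_injective, (Hop i); lia.
  - intros p; apply Hcomm; lia.
  - apply (Hf i Hi).
Qed.

Definition common_negative_fixed_lifts (k : nat) : R -> Prop :=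
  fun x => forall j, (- Z.of_nat k <= j <= -1)%Z -> fixed_lifts (Phi j) x.

(* By induction on k: if the common fixed points of Phi_(-1), ..., Phi_(-k)
   missed those of Phi_(-k-1), the common fixed point lemma would produce a
   common fixed point of the positive lifts. *)
Lemma common_negative_fixed_lifts_nonempty k : (k <= Z.to_nat (- n))%nat ->
  exists x, common_negative_fixed_lifts k x.
Proof.
  induction k as [|k IH]; intros Hk.
  - exists 0; intros j Hj; lia.
  - destruct (classic (exists x, common_negative_fixed_lifts k x /\
                          fixed_lifts (Phi (- Z.of_nat (S k))%Z) x)) as [[x [Hx Hxk]]|Hnone].
    + exists x; intros j Hj.
      destruct (Z.eq_dec j (- Z.of_nat (S k))) as [->|Hne]; auto; apply Hx; lia.
    + exfalso; apply no_common_positive_fixed_point.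
      apply (common_fixed_point positive_index f
               ltac:(intros i Hi; destruct (Hf i Hi) as [? [_ ?]]; auto)
               (common_negative_fixed_lifts k) (fixed_lifts (Phi (- Z.of_nat (S k))%Z))).
      * apply closedR_forall; intros j Hj; apply fixed_lifts_closed, (Hop j); lia.
      * apply fixed_lifts_closed, (Hop _); lia.
      * apply periodic_forall; intros j _; apply fixed_lifts_periodic.
      * apply fixed_lifts_periodic.
      * intros i Hi x; split; intros Hx j Hj; specialize (Hx j Hj);
          apply (negative_fixed_lifts_invariant j ltac:(lia) i Hi x); auto.
      * intros i Hi; exact (negative_fixed_lifts_invariant (- Z.of_nat (S k)) ltac:(lia) i Hi).
      * apply IH; lia.
      * apply fixed_lifts_nonempty, Hfix; lia.
      * intros x Hx Hxk; apply Hnone; exists x; auto.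
Qed.

End Factorisations.


Theorem propositionE (n m : Z) (hn : (n < 0)%Z) (hm : (0 < m)%Z) :
  ~ exists Phi : Z -> S1 -> S1,
      (forall j, (n <= j <= m)%Z ->
         S1_homeomorphism (Phi j) /\ S1_orientation_preserving (Phi j)) /\
      (forall j j', (n <= j < 0)%Z -> (0 < j' <= m)%Z ->
         forall p, Phi j (Phi j' p) = Phi j' (Phi j p)) /\
      (forall j, (n <= j <= m)%Z -> (has_fixed_point (Phi j) <-> j <> 0%Z)) /\
      (forall p, comp_up Phi (Z.to_nat m) p = Phi 0%Z p) /\
      (forall p, Phi 0%Z p = comp_down Phi (Z.to_nat (- n)) p).
Proof.
  intros [Phi [Hop [Hcomm [Hfix [Hup Hdown]]]]].
  destruct (positive_lifts n m Phi hn Hop Hfix) as [f Hf].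
  destruct (common_negative_fixed_lifts_nonempty n m Phi hn hm Hop Hcomm Hfix Hup f Hf
              (Z.to_nat (- n)) (le_n _)) as [x Hx].
  apply (Phi0_fixed_point_free n m Phi hn hm Hfix).
  exists (expS1 x); rewrite Hdown; apply comp_down_fixed.
  intros i Hi; apply Hx; lia.
Qed.
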